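(* For all $\tau\in[-1,1)$, $P_u(\tau)>0$.
   Context: $P_u(\tau)=\sum_{k=0}^{22}c_k\tau^k$ with $(c_0,\dots,c_{22})=\bigl(\tfrac{335867}{539062},\tfrac{419712}{989125},-\tfrac{352463}{3539236},\tfrac{60789}{1703279},-\tfrac{132842}{11825541},\tfrac{43961}{54574472},\tfrac{39599}{12036926},-\tfrac{213665}{48625258},\tfrac{61644}{14973337},-\tfrac{107283}{33444500},\tfrac{44761}{18892011},-\tfrac{28249}{13550715},\tfrac{20641}{14839893},\tfrac{13459}{92774551},-\tfrac{4992}{34838093},-\tfrac{11771}{8149937},\tfrac{24115}{27631671},\tfrac{42106}{39550107},-\tfrac{21163}{32637441},-\tfrac{9782}{15918509},\tfrac{11581}{32652169},\tfrac{14692}{88640147},-\tfrac{12278}{123249611}\bigr)$. *)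

From Stdlib Require Import Reals List.
Import ListNotations.
Open Scope R_scope.

Definition Pu_coeffs : list R :=
  [ 335867/539062; 419712/989125; -(352463/3539236); 60789/1703279;
    -(132842/11825541); 43961/54574472; 39599/12036926; -(213665/48625258);
    61644/14973337; -(107283/33444500); 44761/18892011; -(28249/13550715);
    20641/14839893; 13459/92774551; -(4992/34838093); -(11771/8149937);
    24115/27631671; 42106/39550107; -(21163/32637441); -(9782/15918509);
    11581/32652169; 14692/88640147; -(12278/123249611) ].

(* P_u(tau) = sum_{k=0}^{22} c_k tau^k  (sum_f_R0 f 22 has 23 terms). *)
Definition P_u (tau : R) : R :=
  sum_f_R0 (fun k => nth k Pu_coeffs 0 * tau ^ k) 22.

(* The constant term of P_u outweighs all the others: c_0 > |c_1| + ... + |c_22|.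
   Since |tau^k| <= 1 on [-1, 1], P_u is positive on the whole closed interval. *)
From Stdlib Require Import Reals Lra List.
Open Scope R_scope.

Lemma Rabs_pow_le_1 (t : R) (k : nat) : Rabs t <= 1 -> Rabs (t ^ k) <= 1.
Proof.
  intros Ht. rewrite <- RPow_abs, <- (pow1 k).
  apply pow_incr. split; [apply Rabs_pos | exact Ht].
Qed.

Lemma Rabs_sum_monomials_le (a : nat -> R) (e : nat -> nat) (t : R) (n : nat) :
  Rabs t <= 1 ->
  Rabs (sum_f_R0 (fun k => a k * t ^ e k) n) <= sum_f_R0 (fun k => Rabs (a k)) n.
Proof.
  intros Ht. eapply Rle_trans; [apply sum_f_R0_triangle |].
  apply sum_Rle. intros k _. rewrite Rabs_mult.
  assert (Hk := Rabs_pow_le_1 t (e k) Ht).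
  assert (0 <= Rabs (a k)) by apply Rabs_pos.
  nra.
Qed.

Lemma poly_pos_of_dominant_constant (a : nat -> R) (t : R) (n : nat) :
  Rabs t <= 1 ->
  sum_f_R0 (fun k => Rabs (a (S k))) n < a 0%nat ->
  0 < sum_f_R0 (fun k => a k * t ^ k) (S n).
Proof.
  intros Ht Hdom.
  rewrite decomp_sum by apply Nat.lt_0_succ.
  cbn [Nat.pred]. rewrite pow_O, Rmult_1_r.
  set (tail := sum_f_R0 (fun k => a (S k) * t ^ S k) n).
  assert (Htail : Rabs tail <= sum_f_R0 (fun k => Rabs (a (S k))) n)
    by exact (Rabs_sum_monomials_le (fun k => a (S k)) S t n Ht).
  assert (Hlow := Rle_abs (- tail)). rewrite Rabs_Ropp in Hlow.
  lra.
Qed.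

Lemma Pu_constant_term_dominates :
  sum_f_R0 (fun k => Rabs (nth (S k) Pu_coeffs 0)) 21 < nth 0 Pu_coeffs 0.
Proof.
  unfold Pu_coeffs. cbn [sum_f_R0 nth].
  rewrite ?Rabs_Ropp, !Rabs_right by lra.
  lra.
Qed.

Theorem lemma5p2 : forall tau : R, -1 <= tau < 1 -> P_u tau > 0.
Proof.
  intros tau Htau.
  apply poly_pos_of_dominant_constant.
  - apply Rabs_le. lra.
  - exact Pu_constant_term_dominates.
Qed.
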